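(* Let $L\neq0$, $\ell=(L^2)^{1/3}$, and $h<-\frac32\ell$. Then the cubic $f(u)=u^3+2hu^2+2(c+1)u-L^2$ has three distinct positive real roots $0<u_1<u_2<u_3$ if and only if $c\in(C_{1,\xi}(h),C_{2,\xi}(h))$.
   Context: For $h<-\frac32\ell$, let $s_1\in(0,\ell)$ and $s_2\in(\ell,\infty)$ be the unique numbers with $2s_i+L^2/s_i^2=-2h$; then $C_{1,\xi}(h)$ and $C_{2,\xi}(h)$ are defined by $(s_i+2L^2/s_i^2)s_i=2(C_{i,\xi}(h)+1)$, $i=1,2$. (In the spatial Stark problem, three distinct positive roots of $f$ means that the parabolic coordinate $\xi$ has a non-constant periodic motion, $\xi^2$ oscillating between $u_1$ and $u_2$.) *)

From Stdlib Require Import Reals Lra.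
Open Scope R_scope.

Definition ell (L : R) : R := Rpower (L ^ 2) (1 / 3).

Definition fcubic (L h c u : R) : R := u ^ 3 + 2 * h * u ^ 2 + 2 * (c + 1) * u - L ^ 2.

Definition s_eq (L h s : R) : Prop := 2 * s + L ^ 2 / s ^ 2 = - 2 * h.

Definition Cxi_of (L s : R) : R := (s + 2 * L ^ 2 / s ^ 2) * s / 2 - 1.

Definition three_distinct_pos_roots (L h c : R) : Prop :=
  exists u1 u2 u3 : R, 0 < u1 /\ u1 < u2 /\ u2 < u3 /\
    fcubic L h c u1 = 0 /\ fcubic L h c u2 = 0 /\ fcubic L h c u3 = 0.

From Stdlib Require Import Reals Lra Psatz.
Open Scope R_scope.

(* A solution s of [s_eq] is a point where the tangent to the graph of f passes
   through the origin, i.e. a root of u f'(u) - f(u) = 2 u^3 + 2 h u^2 + L^2,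
   which does not depend on c.  At such a point f(s) = 2 s (c - C(s)), so the
   condition on c says exactly that f(s1) > 0 > f(s2).  Since f(0) = -L^2 < 0
   and f is eventually positive, this sign pattern gives three positive roots
   by the intermediate value theorem.  Conversely, if f has positive roots
   u1 < u2 < u3, then u f'(u) - f(u) = 2 (u - s1) (u - s2) (u + s1 + s2 + h)
   has at u_i the sign of f'(u_i), which is +, -, +; since the last factor is
   positive this forces u1 < s1 < u2 < s2 < u3, whence f(s1) > 0 > f(s2). *)

Definition tangent_cubic (L h u : R) : R := 2 * u ^ 3 + 2 * h * u ^ 2 + L ^ 2.

Lemma tangent_cubic_s_eq (L h s : R) :
  s <> 0 -> s_eq L h s -> tangent_cubic L h s = 0.
Proof.
  unfold s_eq, tangent_cubic; intros Hs Heq.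
  assert (HL : L ^ 2 = (- 2 * h - 2 * s) * s ^ 2) by (rewrite <- Heq; field; exact Hs).
  rewrite HL; field; exact Hs.
Qed.

Lemma fcubic_s_eq (L h c s : R) :
  s <> 0 -> s_eq L h s -> fcubic L h c s = 2 * s * (c - Cxi_of L s).
Proof.
  unfold s_eq, fcubic, Cxi_of; intros Hs Heq.
  assert (HL : L ^ 2 = (- 2 * h - 2 * s) * s ^ 2) by (rewrite <- Heq; field; exact Hs).
  rewrite HL; field; exact Hs.
Qed.

Lemma Rmult_eq0_reg_l (x y : R) : x <> 0 -> x * y = 0 -> y = 0.
Proof. intros Hx Hxy; destruct (Rmult_integral _ _ Hxy); [contradiction | assumption]. Qed.

Lemma pow2_pos (x : R) : x <> 0 -> 0 < x ^ 2.
Proof. intro Hx; rewrite <- Rsqr_pow2; exact (Rsqr_pos_lt x Hx). Qed.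

Lemma tangent_cubic_factor (L h s1 s2 u : R) :
  s1 <> s2 -> tangent_cubic L h s1 = 0 -> tangent_cubic L h s2 = 0 ->
  tangent_cubic L h u = 2 * (u - s1) * (u - s2) * (u + s1 + s2 + h).
Proof.
  unfold tangent_cubic; intros H12 P1 P2.
  assert (Q : s1 ^ 2 + s1 * s2 + s2 ^ 2 + h * (s1 + s2) = 0).
  { apply (Rmult_eq0_reg_l (2 * (s2 - s1))); [lra |].
    replace 0 with (2 * s2 ^ 3 + 2 * h * s2 ^ 2 + L ^ 2
                    - (2 * s1 ^ 3 + 2 * h * s1 ^ 2 + L ^ 2)) by lra.
    ring. }
  assert (HL : L ^ 2 = - 2 * s1 ^ 3 - 2 * h * s1 ^ 2) by lra.
  rewrite HL.
  transitivity (2 * (u - s1) * (u - s2) * (u + s1 + s2 + h)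
                + 2 * (u - s1) * (s1 ^ 2 + s1 * s2 + s2 ^ 2 + h * (s1 + s2))).
  - ring.
  - rewrite Q; ring.
Qed.

Lemma tangent_cubic_cofactor_pos (L h s1 s2 : R) :
  L <> 0 -> 0 < s1 < s2 ->
  tangent_cubic L h s1 = 0 -> tangent_cubic L h s2 = 0 -> 0 < s1 + s2 + h.
Proof.
  intros HL Hs P1 P2.
  assert (F0 := tangent_cubic_factor L h s1 s2 0 ltac:(lra) P1 P2).
  unfold tangent_cubic in F0.
  assert (0 < L ^ 2) by (apply pow2_pos; exact HL).
  assert (0 < s1 * s2) by nra.
  nra.
Qed.

Lemma monic_cubic_vieta (a b d r1 r2 r3 : R) :
  r1 <> r2 -> r1 <> r3 -> r2 <> r3 ->
  r1 ^ 3 + a * r1 ^ 2 + b * r1 + d = 0 ->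
  r2 ^ 3 + a * r2 ^ 2 + b * r2 + d = 0 ->
  r3 ^ 3 + a * r3 ^ 2 + b * r3 + d = 0 ->
  a = - (r1 + r2 + r3) /\ b = r1 * r2 + r1 * r3 + r2 * r3 /\ d = - (r1 * r2 * r3).
Proof.
  intros H12 H13 H23 P1 P2 P3.
  assert (Q12 : r1 ^ 2 + r1 * r2 + r2 ^ 2 + a * (r1 + r2) + b = 0).
  { apply (Rmult_eq0_reg_l (r2 - r1)); [lra |].
    replace 0 with (r2 ^ 3 + a * r2 ^ 2 + b * r2 + d - (r1 ^ 3 + a * r1 ^ 2 + b * r1 + d))
      by lra.
    ring. }
  assert (Q13 : r1 ^ 2 + r1 * r3 + r3 ^ 2 + a * (r1 + r3) + b = 0).
  { apply (Rmult_eq0_reg_l (r3 - r1)); [lra |].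
    replace 0 with (r3 ^ 3 + a * r3 ^ 2 + b * r3 + d - (r1 ^ 3 + a * r1 ^ 2 + b * r1 + d))
      by lra.
    ring. }
  assert (Ha : r1 + r2 + r3 + a = 0).
  { apply (Rmult_eq0_reg_l (r3 - r2)); [lra |].
    replace 0 with (r1 ^ 2 + r1 * r3 + r3 ^ 2 + a * (r1 + r3) + b
                    - (r1 ^ 2 + r1 * r2 + r2 ^ 2 + a * (r1 + r2) + b)) by lra.
    ring. }
  assert (Ea : a = - (r1 + r2 + r3)) by lra.
  rewrite Ea in Q12, P1.
  assert (Eb : b = r1 * r2 + r1 * r3 + r2 * r3) by nra.
  rewrite Eb in P1.
  repeat split; [exact Ea | exact Eb | nra].
Qed.

Lemma root_strictly_between (f : R -> R) (x y : R) :
  continuity f -> x < y -> f x * f y < 0 -> exists z, x < z < y /\ f z = 0.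
Proof.
  intros Hf Hxy Hsign.
  destruct (IVT_cor f x y Hf ltac:(lra) ltac:(lra)) as [z [[Hxz Hzy] Hz]].
  exists z; repeat split; try exact Hz.
  - destruct Hxz as [| <-]; [assumption |]. rewrite Hz in Hsign; lra.
  - destruct Hzy as [| ->]; [assumption |]. rewrite Hz in Hsign; lra.
Qed.

Lemma monic_cubic_eventually_pos (a b d x : R) :
  exists M, x < M /\ 0 < M ^ 3 + a * M ^ 2 + b * M + d.
Proof.
  set (M := 1 + Rabs x + Rabs a + Rabs b + Rabs d).
  exists M.
  pose proof (Rle_abs x). pose proof (Rabs_pos x). pose proof (Rabs_pos a).
  pose proof (Rabs_pos b). pose proof (Rabs_pos d).
  pose proof (Rle_abs (- a)). pose proof (Rle_abs (- b)). pose proof (Rle_abs (- d)).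
  rewrite !Rabs_Ropp in *.
  assert (HM : 1 + Rabs a + Rabs b + Rabs d <= M) by (unfold M; lra).
  split; [unfold M; lra |].
  assert (T1 : M ^ 2 * (M + a) >= M ^ 2 * (1 + Rabs b + Rabs d)) by nra.
  assert (T2 : M ^ 2 >= M) by nra.
  nra.
Qed.

Lemma fcubic_continuous (L h c : R) : continuity (fcubic L h c).
Proof. unfold fcubic; reg. Qed.

Lemma three_distinct_pos_roots_of_signs (L h c s1 s2 : R) :
  L <> 0 -> 0 < s1 < s2 -> 0 < fcubic L h c s1 -> fcubic L h c s2 < 0 ->
  three_distinct_pos_roots L h c.
Proof.
  intros HL Hs F1 F2.
  assert (F0 : fcubic L h c 0 < 0).
  { unfold fcubic. assert (0 < L ^ 2) by (apply pow2_pos; exact HL). lra. }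
  destruct (monic_cubic_eventually_pos (2 * h) (2 * (c + 1)) (- L ^ 2) s2)
    as [M [HM FM]].
  assert (FM' : 0 < fcubic L h c M) by (unfold fcubic; lra).
  destruct (root_strictly_between (fcubic L h c) 0 s1) as [u1 [? R1]];
    [apply fcubic_continuous | lra | nra |].
  destruct (root_strictly_between (fcubic L h c) s1 s2) as [u2 [? R2]];
    [apply fcubic_continuous | lra | nra |].
  destruct (root_strictly_between (fcubic L h c) s2 M) as [u3 [? R3]];
    [apply fcubic_continuous | lra | nra |].
  exists u1, u2, u3; repeat split; try lra; assumption.
Qed.

Lemma tangent_points_interlace (L h s1 s2 u1 u2 u3 : R) :
  L <> 0 -> 0 < s1 < s2 ->
  tangent_cubic L h s1 = 0 -> tangent_cubic L h s2 = 0 ->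
  0 < u1 < u2 -> u2 < u3 ->
  2 * h = - (u1 + u2 + u3) -> L ^ 2 = u1 * u2 * u3 ->
  u1 < s1 < u2 /\ u2 < s2 < u3.
Proof.
  intros HL Hs P1 P2 Hu12 Hu23 Eh EL.
  assert (Hcof := tangent_cubic_cofactor_pos L h s1 s2 HL Hs P1 P2).
  assert (Htan : forall u, 2 * ((u - s1) * (u - s2)) * (u + s1 + s2 + h)
                   = u * ((u - u1) * (u - u2) + (u - u1) * (u - u3) + (u - u2) * (u - u3))
                     - (u - u1) * (u - u2) * (u - u3)).
  { intro u. rewrite <- Rmult_assoc, <- (tangent_cubic_factor L h s1 s2 u ltac:(lra) P1 P2).
    unfold tangent_cubic. rewrite EL. replace h with (- (u1 + u2 + u3) / 2) by lra. field. }
  assert (S1 : 0 < (u1 - s1) * (u1 - s2)).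
  { pose proof (Htan u1) as E.
    replace (u1 * _ - _) with (u1 * ((u2 - u1) * (u3 - u1))) in E by ring.
    assert (0 < u1 * ((u2 - u1) * (u3 - u1))) by (repeat apply Rmult_lt_0_compat; lra).
    nra. }
  assert (S2 : (u2 - s1) * (u2 - s2) < 0).
  { pose proof (Htan u2) as E.
    replace (u2 * _ - _) with (- (u2 * ((u2 - u1) * (u3 - u2)))) in E by ring.
    assert (0 < u2 * ((u2 - u1) * (u3 - u2))) by (repeat apply Rmult_lt_0_compat; lra).
    nra. }
  assert (S3 : 0 < (u3 - s1) * (u3 - s2)).
  { pose proof (Htan u3) as E.
    replace (u3 * _ - _) with (u3 * ((u3 - u1) * (u3 - u2))) in E by ring.
    assert (0 < u3 * ((u3 - u1) * (u3 - u2))) by (repeat apply Rmult_lt_0_compat; lra).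
    nra. }
  assert (I2 : s1 < u2 < s2) by (split; nra).
  split; split; nra.
Qed.

Lemma fcubic_signs_of_three_roots (L h c s1 s2 : R) :
  L <> 0 -> 0 < s1 < s2 ->
  tangent_cubic L h s1 = 0 -> tangent_cubic L h s2 = 0 ->
  three_distinct_pos_roots L h c ->
  0 < fcubic L h c s1 /\ fcubic L h c s2 < 0.
Proof.
  intros HL Hs P1 P2 (u1 & u2 & u3 & Hu1 & H12 & H23 & R1 & R2 & R3).
  unfold fcubic in R1, R2, R3.
  destruct (monic_cubic_vieta (2 * h) (2 * (c + 1)) (- L ^ 2) u1 u2 u3)
    as (Ea & Eb & Ed); try lra.
  destruct (tangent_points_interlace L h s1 s2 u1 u2 u3) as [I1 I2]; try lra.
  assert (Hfact : forall u, fcubic L h c u = (u - u1) * (u - u2) * (u - u3)).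
  { intro u; unfold fcubic; rewrite Ea, Eb.
    replace (L ^ 2) with (u1 * u2 * u3) by lra. ring. }
  rewrite !Hfact; split.
  - replace (_ * _ * _) with ((s1 - u1) * ((u2 - s1) * (u3 - s1))) by ring.
    repeat apply Rmult_lt_0_compat; lra.
  - replace (_ * _ * _) with (- ((s2 - u1) * ((s2 - u2) * (u3 - s2)))) by ring.
    apply Ropp_lt_gt_0_contravar; repeat apply Rmult_lt_0_compat; lra.
Qed.

Lemma three_distinct_pos_roots_iff_signs (L h c s1 s2 : R) :
  L <> 0 -> 0 < s1 < s2 ->
  tangent_cubic L h s1 = 0 -> tangent_cubic L h s2 = 0 ->
  three_distinct_pos_roots L h c <-> 0 < fcubic L h c s1 /\ fcubic L h c s2 < 0.
Proof.
  intros HL Hs P1 P2; split.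
  - exact (fcubic_signs_of_three_roots L h c s1 s2 HL Hs P1 P2).
  - intros [F1 F2]; exact (three_distinct_pos_roots_of_signs L h c s1 s2 HL Hs F1 F2).
Qed.

Theorem proposition5p2 (L h s1 s2 c : R) :
  L <> 0 ->
  h < - (3 / 2) * ell L ->
  0 < s1 < ell L -> s_eq L h s1 ->
  ell L < s2 -> s_eq L h s2 ->
  (three_distinct_pos_roots L h c <->
   Cxi_of L s1 < c < Cxi_of L s2).
Proof.
  (* The bound on h only guarantees that s1 and s2 exist; here they are given. *)
  intros HL _ [Hs1 Hs1l] E1 Hs2l E2.
  assert (Hs : 0 < s1 < s2) by lra.
  rewrite (three_distinct_pos_roots_iff_signs L h c s1 s2 HL Hs
               (tangent_cubic_s_eq L h s1 ltac:(lra) E1)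
               (tangent_cubic_s_eq L h s2 ltac:(lra) E2)).
  rewrite (fcubic_s_eq L h c s1 ltac:(lra) E1), (fcubic_s_eq L h c s2 ltac:(lra) E2).
  split; intros [Hc1 Hc2]; split; nra.
Qed.
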